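(* Let $x,y\in S^1\cap\mathbb{H}^2$ be distinct, let $\{x_*,y_*\}=S^1\cap\partial\mathbb{H}^2=\{-1,1\}$, labelled so that $x_*,x,y,y_*$ occur in this order on the upper unit semicircle, and let $z$ be the hyperbolic midpoint of the hyperbolic segment $J[x,y]$. Let $v=L(x,x_* )\cap L(y,y_* )$ and let $a$ be the centre of the circle through $x$ and $y$ orthogonal to $S^1$, i.e. $a=i\frac{y(1+|x|^2)-x(1+|y|^2)}{2(x_2y_1-x_1y_2)}$ where $x=x_1+ix_2$, $y=y_1+iy_2$. Then: (1) if the line $L(x,y)$ meets the real axis, at the point $w$, then the line $L(w,z)$ is tangent to the circle $S^1$; (2) the line $L(v,z)$ is orthogonal to the real axis, i.e. $\operatorname{Re}v=\operatorname{Re}z$; (3) the line $L(a,z)$ is orthogonal to the real axis, i.e. $\operatorname{Re}a=\operatorname{Re}z$; (4) writing $x_1,y_1,z_1$ for the real points $\operatorname{Re}x,\operatorname{Re}y,\operatorname{Re}z$, the angle $\angle y_1z_1y$ equals the angle $\angle x_1z_1x$.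
   Context: $\mathbb{H}^2$ is the upper half plane with boundary $\partial\mathbb{H}^2=\mathbb{R}$, $S^1$ is the unit circle. $L(p,q)$ denotes the line through $p$ and $q$. The hyperbolic distance on $\mathbb{H}^2$ satisfies $\cosh\rho(x,y)=1+\frac{|x-y|^2}{2\operatorname{Im}x\operatorname{Im}y}$; the hyperbolic segment $J[x,y]$ for $x,y\in S^1\cap\mathbb{H}^2$ is the arc of $S^1$ between $x$ and $y$, and its hyperbolic midpoint is the $z\in J[x,y]$ with $\rho(x,z)=\rho(z,y)$. $\angle pqr$ denotes the angle at $q$ between the segments $[q,p]$ and $[q,r]$. *)

From Stdlib Require Export Reals.
From Coquelicot Require Export Coquelicot.
Open Scope R_scope.

Definition in_H2 (p : C) : Prop := 0 < Im p.

Definition on_S1 (p : C) : Prop := Cmod p = 1.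

Definition arcosh (t : R) : R := ln (t + sqrt (t ^ 2 - 1)).

Definition rho (p q : C) : R :=
  arcosh (1 + (Cmod (p - q)%C) ^ 2 / (2 * Im p * Im q)).

(* hyperbolic segment J[p,q] for p q on S^1 ∩ H^2: arc of S^1 between them *)
Definition J (p q : C) (w : C) : Prop :=
  on_S1 w /\ in_H2 w /\
  Rmin (Re p) (Re q) <= Re w <= Rmax (Re p) (Re q).

Definition hyp_midpoint (p q z : C) : Prop :=
  J p q z /\ rho p z = rho z q.

Definition L (p q : C) (w : C) : Prop :=
  exists t : R, w = (p + RtoC t * (q - p))%C.

Definition tangent_to_S1 (line : C -> Prop) : Prop :=
  exists p, line p /\ on_S1 p /\ forall q, line q -> on_S1 q -> q = p.

(* p0, p1, p2, p3 occur in this order on the upper unit semicircle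
   (points of the upper semicircle are ordered by their real parts,
    in one of the two directions) *)
Definition in_order4 (p0 p1 p2 p3 : C) : Prop :=
  (Re p0 < Re p1 /\ Re p1 < Re p2 /\ Re p2 < Re p3) \/
  (Re p0 > Re p1 /\ Re p1 > Re p2 /\ Re p2 > Re p3).

Definition orth_centre (p q : C) : C :=
  (Ci * (q * RtoC (1 + Cmod p ^ 2) - p * RtoC (1 + Cmod q ^ 2))
     / RtoC (2 * (Im p * Re q - Re p * Im q)))%C.

Definition re_pt (p : C) : C := RtoC (Re p).

Definition angle (p q r : C) : R :=
  acos ((Re (p - q)%C * Re (r - q)%C + Im (p - q)%C * Im (r - q)%C)
        / (Cmod (p - q)%C * Cmod (r - q)%C)).

From Stdlib Require Import Lra Psatz.

(* On S^1 we have |p - q|^2 = 2 - 2 p.q, so the hyperbolic equidistance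
   rho(x, z) = rho(z, y) of a point z of S^1 is the linear equation
   Re z * (y1 x2 - x1 y2) = x2 - y2.  The intersection v of the chords
   [x, x_*] and [y, y_*] and the centre a of the circle orthogonal to S^1
   through x and y satisfy the same equation in their real parts, which gives
   (2) and (3).  The real point w of L(x, y) satisfies Re w * (x2 - y2) =
   y1 x2 - x1 y2, hence w.z = 1: the segment [w, z] is orthogonal to the
   radius at z, which is (1).  Finally the equation also says that the feet
   of x and y lie on opposite sides of Re z at distances proportional to the
   heights of x and y, so the two right triangles in (4) are similar. *)

Definition cross (p q : C) : R := Re p * Im q - Im p * Re q.

Lemma on_S1_sqr (p : C) : on_S1 p -> Re p ^ 2 + Im p ^ 2 = 1.
Proof. intros Hp. rewrite <- Cmod2_alt, Hp. ring. Qed.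

Lemma arcosh_inj (a b : R) : 1 <= a -> 1 <= b -> arcosh a = arcosh b -> a = b.
Proof.
  unfold arcosh; intros Ha Hb Hab.
  pose proof (sqrt_pos (a ^ 2 - 1)); pose proof (sqrt_pos (b ^ 2 - 1)).
  apply ln_inv in Hab; try lra.
  destruct (Rtotal_order a b) as [Hlt | [Heq | Hgt]]; auto.
  - assert (sqrt (a ^ 2 - 1) <= sqrt (b ^ 2 - 1)) by (apply sqrt_le_1_alt; nra); lra.
  - assert (sqrt (b ^ 2 - 1) <= sqrt (a ^ 2 - 1)) by (apply sqrt_le_1_alt; nra); lra.
Qed.

Lemma cosh_rho_ge1 (p q : C) : in_H2 p -> in_H2 q ->
  1 <= 1 + Cmod (p - q) ^ 2 / (2 * Im p * Im q).
Proof.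
  unfold in_H2; intros Hp Hq.
  assert (0 <= Cmod (p - q) ^ 2 / (2 * Im p * Im q))
    by (apply Rdiv_le_0_compat; [apply pow2_ge_0 | nra]).
  lra.
Qed.

Lemma rho_equidistant (p q z : C) : in_H2 p -> in_H2 q -> in_H2 z ->
  rho p z = rho z q -> Cmod (p - z) ^ 2 * Im q = Cmod (z - q) ^ 2 * Im p.
Proof.
  intros Hp Hq Hz Hrho.
  apply arcosh_inj in Hrho; try apply cosh_rho_ge1; auto.
  unfold in_H2 in *.
  apply (f_equal (fun t => (t - 1) * (2 * Im p * Im z) * (2 * Im z * Im q))) in Hrho.
  field_simplify in Hrho; nra.
Qed.

Lemma Cmod_sub_S1 (p q : C) : on_S1 p -> on_S1 q ->
  Cmod (p - q) ^ 2 = 2 - 2 * (Re p * Re q + Im p * Im q).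
Proof.
  intros Hp Hq. apply on_S1_sqr in Hp; apply on_S1_sqr in Hq.
  rewrite Cmod2_alt. destruct p as [p1 p2], q as [q1 q2]; simpl in *. nra.
Qed.

Lemma cross_S1_H2_neq0 (x y : C) : on_S1 x -> in_H2 x -> on_S1 y -> in_H2 y ->
  x <> y -> cross y x <> 0.
Proof.
  intros Hx Hx2 Hy Hy2 Hxy Hcross; apply Hxy.
  apply on_S1_sqr in Hx; apply on_S1_sqr in Hy.
  unfold cross, in_H2 in *; destruct x as [x1 x2], y as [y1 y2]; simpl in *.
  (* Lagrange's identity: dot^2 + cross^2 = |x|^2 |y|^2 = 1, so x and y are
     parallel unit vectors, and y = -x is excluded by the half plane. *)
  assert (Hlagrange : (x1 * y1 + x2 * y2) ^ 2 = 1) by nra.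
  assert (Hdot : x1 * y1 + x2 * y2 = 1).
  { assert (x1 * y1 + x2 * y2 = 1 \/ x1 * y1 + x2 * y2 = -1) as [Hd | Hd] by nra; auto.
    assert ((x1 + y1) ^ 2 + (x2 + y2) ^ 2 = 0) by nra.
    pose proof (pow2_ge_0 (x1 + y1)); nra. }
  assert (Hdist : (x1 - y1) ^ 2 + (x2 - y2) ^ 2 = 0) by nra.
  pose proof (pow2_ge_0 (x1 - y1)); pose proof (pow2_ge_0 (x2 - y2)).
  f_equal; nra.
Qed.

Lemma midpoint_Re (x y z : C) : on_S1 x -> in_H2 x -> on_S1 y -> in_H2 y ->
  hyp_midpoint x y z -> Re z * cross y x = Im x - Im y.
Proof.
  intros Hx Hx2 Hy Hy2 [[Hz [Hz2 _]] Hrho].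
  apply rho_equidistant in Hrho; auto.
  rewrite (Cmod_sub_S1 x z), (Cmod_sub_S1 z y) in Hrho; auto.
  apply on_S1_sqr in Hx; apply on_S1_sqr in Hy; apply on_S1_sqr in Hz.
  unfold cross; lra.
Qed.

Lemma L_real_point (x y w : C) : L x y w -> Im w = 0 -> Re w * (Im x - Im y) = cross y x.
Proof.
  intros [t ->]; unfold cross; destruct x as [x1 x2], y as [y1 y2].
  unfold RtoC, Cplus, Cminus, Cmult, Copp; simpl; intros Hw.
  assert (Ht : t * (x2 - y2) = x2) by lra.
  transitivity (x1 * (x2 - y2) + (y1 - x1) * (t * (x2 - y2))); [ring | rewrite Ht; ring].
Qed.

Lemma tangent_L_orth_radius (w z : C) : on_S1 z -> w <> z ->
  Re z * Re (z - w) + Im z * Im (z - w) = 0 -> tangent_to_S1 (L w z).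
Proof.
  intros Hz Hwz Horth; exists z; repeat split; auto.
  - exists 1; destruct w, z; unfold RtoC, Cplus, Cminus, Cmult, Copp; simpl; f_equal; ring.
  - intros q [r ->] Hq.
    apply on_S1_sqr in Hz; apply on_S1_sqr in Hq.
    assert (Hd : 0 < Cmod (z - w) ^ 2).
    { apply pow_lt, Cmod_gt_0; intros H; apply Hwz.
      apply (f_equal (Cplus w)) in H; rewrite Cplus_0_r in H; rewrite <- H; ring. }
    rewrite Cmod2_alt in Hd.
    (* With q = z + (r - 1)(z - w), orthogonality gives |q|^2 = 1 + (r - 1)^2 |z - w|^2. *)
    assert (Hr : (r - 1) ^ 2 * (Re (z - w) ^ 2 + Im (z - w) ^ 2) = 0).
    { destruct w as [w1 w2], z as [z1 z2].
      cbn [Re Im fst snd RtoC Cplus Cminus Cmult Copp] in *.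
      assert (Hexp : (r - 1) ^ 2 * ((z1 + - w1) ^ 2 + (z2 + - w2) ^ 2)
        = (w1 + (r * (z1 + - w1) - 0 * (z2 + - w2))) ^ 2
          + (w2 + (r * (z2 + - w2) + 0 * (z1 + - w1))) ^ 2
          - (z1 ^ 2 + z2 ^ 2) - 2 * (r - 1) * (z1 * (z1 + - w1) + z2 * (z2 + - w2))) by ring.
      rewrite Hexp, Hq, Hz, Horth; ring. }
    assert (Hr1 : (r - 1) ^ 2 = 0) by (apply Rmult_integral in Hr as [Hr | Hr]; lra).
    assert (r = 1) by nra.
    subst r; ring.
Qed.

Lemma Re_chords_meet (x y v : C) (e : R) : on_S1 x -> in_H2 x -> on_S1 y ->
  (e = 1 \/ e = -1) -> L x (RtoC e) v -> L y (RtoC (- e)) v ->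
  Re v * cross y x = Im x - Im y.
Proof.
  intros Hx Hx2 Hy He [t Ht] [s Hs].
  apply on_S1_sqr in Hx; apply on_S1_sqr in Hy.
  unfold cross, in_H2 in *; destruct x as [x1 x2], y as [y1 y2], v as [v1 v2].
  cbn [Re Im fst snd RtoC Cplus Cminus Cmult Copp] in *.
  injection Ht as Ht1 Ht2; injection Hs as Hs1 Hs2.
  assert (He2 : e * e = 1) by (destruct He as [-> | ->]; ring).
  assert (Hvx1 : v1 - e = (1 - t) * (x1 - e)) by lra.
  assert (Hvx2 : v2 = (1 - t) * x2) by lra.
  assert (Hvy1 : v1 + e = (1 - s) * (y1 + e)) by lra.
  assert (Hvy2 : v2 = (1 - s) * y2) by lra.
  assert (Hline_x : (v1 - e) * x2 = v2 * (x1 - e)) by (rewrite Hvx1, Hvx2; ring).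
  assert (Hline_y : (v1 + e) * y2 = v2 * (y1 + e)) by (rewrite Hvy1, Hvy2; ring).
  (* [K] is the determinant of the linear system formed by the two lines. *)
  set (K := x2 * (y1 + e) - y2 * (x1 - e)).
  assert (HK : (1 - s) * K = 2 * e * x2).
  { transitivity (x2 * (v1 + e) - v2 * (x1 - e)).
    - unfold K; rewrite Hvy1, Hvy2; ring.
    - rewrite <- Hline_x; ring. }
  assert (HK0 : K <> 0) by (intros H0; rewrite H0 in HK; nra).
  assert (Hv1 : v1 * K = e * x2 * (y1 + e) + e * y2 * (x1 - e)).
  { transitivity ((v1 - e) * x2 * (y1 + e) - (v1 + e) * y2 * (x1 - e)
                  + e * x2 * (y1 + e) + e * y2 * (x1 - e)); [unfold K; ring |].
    rewrite Hline_x, Hline_y; ring. }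
  apply (Rmult_eq_reg_r K); auto.
  transitivity ((v1 * K) * (y1 * x2 - y2 * x1)); [ring | rewrite Hv1; unfold K].
  transitivity ((x2 - y2) * (x2 * (y1 + e) - y2 * (x1 - e))
                + e * (x2 ^ 2 * (y1 ^ 2 + y2 ^ 2 - 1) - y2 ^ 2 * (x1 ^ 2 + x2 ^ 2 - 1))
                + (e * e - 1) * (x2 - y2) * (y1 * x2 - y2 * x1)); [ring |].
  rewrite Hx, Hy, He2; ring.
Qed.
Lemma Re_orth_centre (x y : C) : on_S1 x -> on_S1 y -> cross y x <> 0 ->
  Re (orth_centre x y) * cross y x = Im x - Im y.
Proof.
  intros Hx Hy Hcross.
  unfold orth_centre; rewrite Hx, Hy.
  unfold cross in *; destruct x as [x1 x2], y as [y1 y2].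
  cbn [Re Im fst snd RtoC Cplus Cminus Cmult Copp Cdiv Cinv Ci] in *.
  field; lra.
Qed.

Lemma angle_at_foot (p : C) (c : R) :
  angle (re_pt p) (RtoC c) p = acos (Rabs (Re p - c) / Cmod (p - RtoC c)).
Proof.
  unfold angle, re_pt; f_equal.
  rewrite <- RtoC_minus, Cmod_R, re_RtoC.
  replace (Im (RtoC (Re p - c))) with 0 by reflexivity.
  replace (Re (p - RtoC c)) with (Re p - c) by reflexivity.
  set (d := Re p - c); set (m := Cmod (p - RtoC c)).
  assert (Hdd : d * d = Rabs d * Rabs d)
    by (rewrite <- Rabs_mult; symmetry; apply Rabs_pos_eq; nra).
  rewrite Rmult_0_l, Rplus_0_r, Hdd.
  destruct (Req_dec (Rabs d) 0) as [H0 | H0]; [rewrite H0; unfold Rdiv; ring |].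
  unfold Rdiv; rewrite Rinv_mult.
  transitivity (Rabs d * (Rabs d * / Rabs d) * / m); [ring | rewrite Rinv_r; auto; ring].
Qed.

Lemma Cmod_sub_real (p : C) (c : R) : Cmod (p - RtoC c) ^ 2 = (Re p - c) ^ 2 + Im p ^ 2.
Proof.
  rewrite Cmod2_alt; destruct p; cbn [Re Im fst snd RtoC Cminus Cplus Copp]; ring.
Qed.

Lemma angle_at_foot_eq (p q : C) (c : R) : in_H2 p -> in_H2 q ->
  (Re p - c) * Im q + (Re q - c) * Im p = 0 ->
  angle (re_pt p) (RtoC c) p = angle (re_pt q) (RtoC c) q.
Proof.
  unfold in_H2; intros Hp Hq Hbal.
  rewrite !angle_at_foot; f_equal.
  pose proof (Cmod_sub_real p c) as Hmp; pose proof (Cmod_sub_real q c) as Hmq.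
  set (dp := Re p - c) in *; set (dq := Re q - c) in *.
  set (mp := Cmod (p - RtoC c)) in *; set (mq := Cmod (q - RtoC c)) in *.
  assert (Hmp0 : 0 < mp).
  { pose proof (pow2_ge_0 dp); assert (0 <= mp) by apply Cmod_ge_0; nra. }
  assert (Hmq0 : 0 < mq).
  { pose proof (pow2_ge_0 dq); assert (0 <= mq) by apply Cmod_ge_0; nra. }
  apply Rsqr_inj; try (apply Rdiv_le_0_compat; [apply Rabs_pos | lra]).
  rewrite !Rsqr_div', <- !Rsqr_abs; unfold Rsqr.
  replace (mp * mp) with (dp ^ 2 + Im p ^ 2) by (rewrite <- Hmp; ring).
  replace (mq * mq) with (dq ^ 2 + Im q ^ 2) by (rewrite <- Hmq; ring).
  assert (Hsq : dp ^ 2 * Im q ^ 2 = dq ^ 2 * Im p ^ 2).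
  { replace (dp ^ 2 * Im q ^ 2) with ((dp * Im q) ^ 2) by ring.
    replace (dp * Im q) with (- (dq * Im p)) by lra; ring. }
  assert (0 < dp ^ 2 + Im p ^ 2) by (pose proof (pow2_ge_0 dp); nra).
  assert (0 < dq ^ 2 + Im q ^ 2) by (pose proof (pow2_ge_0 dq); nra).
  set (D := (dp ^ 2 + Im p ^ 2) * (dq ^ 2 + Im q ^ 2)).
  transitivity (dp ^ 2 * (dq ^ 2 + Im q ^ 2) / D); [unfold D; field; lra |].
  transitivity (dq ^ 2 * (dp ^ 2 + Im p ^ 2) / D); [f_equal; lra | unfold D; field; lra].
Qed.

Lemma foot_balance_S1 (x y : C) (c : R) : on_S1 x -> on_S1 y -> cross y x <> 0 ->
  c * cross y x = Im x - Im y -> (Re y - c) * Im x + (Re x - c) * Im y = 0.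
Proof.
  intros Hx Hy Hcross Hc.
  apply on_S1_sqr in Hx; apply on_S1_sqr in Hy.
  apply (Rmult_eq_reg_r (cross y x)); auto.
  transitivity ((Re y * Im x + Re x * Im y) * cross y x - (c * cross y x) * (Im x + Im y));
    [ring | rewrite Hc; unfold cross].
  transitivity (Im x ^ 2 * (Re y ^ 2 + Im y ^ 2) - Im y ^ 2 * (Re x ^ 2 + Im x ^ 2)
                - Im x ^ 2 + Im y ^ 2); [ring | rewrite Hx, Hy; ring].
Qed.

Theorem lemma3p1 (x y xs ys z : C) :
  on_S1 x -> in_H2 x -> on_S1 y -> in_H2 y -> x <> y ->
  ((xs = RtoC (-1) /\ ys = RtoC 1) \/ (xs = RtoC 1 /\ ys = RtoC (-1))) ->
  in_order4 xs x y ys ->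
  hyp_midpoint x y z ->
  (* (1) *)
  (forall w : C, Im w = 0 -> L x y w -> tangent_to_S1 (L w z)) /\
  (* (2) v = L(x,x_* ) ∩ L(y,y_* ) *)
  (forall v : C, L x xs v -> L y ys v -> Re v = Re z) /\
  (* (3) *)
  Re (orth_centre x y) = Re z /\
  (* (4) *)
  angle (re_pt y) (re_pt z) y = angle (re_pt x) (re_pt z) x.
Proof.
  intros Hx Hx2 Hy Hy2 Hxy Hends _ Hmid.
  pose proof (cross_S1_H2_neq0 x y Hx Hx2 Hy Hy2 Hxy) as Hcross.
  pose proof (midpoint_Re x y z Hx Hx2 Hy Hy2 Hmid) as Hz.
  destruct Hmid as [[HzS1 [Hz2 _]] _].
  split; [| split; [| split]].
  - intros w Hw0 Hw.
    pose proof (L_real_point x y w Hw Hw0) as Hwxy.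
    apply tangent_L_orth_radius; auto.
    + intros ->; unfold in_H2 in Hz2; lra.
    + (* w is the pole of the chord [x, y] with respect to S^1. *)
      assert (Hpole : Re w * Re z = 1).
      { apply (Rmult_eq_reg_r (cross y x)); auto.
        rewrite Rmult_assoc, Hz, Hwxy; ring. }
      apply on_S1_sqr in HzS1; destruct w as [w1 w2], z as [z1 z2].
      cbn [Re Im fst snd Cminus Cplus Copp] in *; subst w2; nra.
  - intros v Hvx Hvy.
    apply (Rmult_eq_reg_r (cross y x)); auto; rewrite Hz.
    destruct Hends as [[-> ->] | [-> ->]].
    + apply (Re_chords_meet x y v (-1)); auto.
      replace (- -1) with 1 by ring; auto.
    + apply (Re_chords_meet x y v 1); auto.
  - apply (Rmult_eq_reg_r (cross y x)); auto.
    rewrite Hz; apply Re_orth_centre; auto.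
  - apply angle_at_foot_eq; auto.
    apply foot_balance_S1; auto.
Qed.
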